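(* For every integer $n\ge1$ and real $x$, $$\frac{\mathfrak{C}_n(x)}{n!}=\det\begin{pmatrix} R(1)&1&&&\\ R(2)&R(1)&1&&\\ \vdots&\vdots&\ddots&\ddots&\\ R(n-1)&R(n-2)&\cdots&R(1)&1\\ R(n)&R(n-1)&\cdots&R(2)&R(1) \end{pmatrix},$$ the $n\times n$ lower Hessenberg matrix with entries $R(i-j+1)$ for $i\ge j$, $1$ on the superdiagonal and $0$ elsewhere, where $$R(j)=x\,\frac{(-1)^{j-1}}{j!}\left(\left(\tfrac12\right)^j-\left(-\tfrac12\right)^j\right).$$
   Context: For $n\ge1$ the central factorial is $x^{[n]}=x\,(x+\tfrac n2-1)(x+\tfrac n2-2)\cdots(x-\tfrac n2+1)$ (a product of $n$ factors), and $x^{[0]}=1$. The central factorial numbers of the second kind $T(n,k)$ ($0\le k\le n$) are defined by $x^n=\sum_{k=0}^n T(n,k)\,x^{[k]}$; equivalently $T(n,k)=\frac1{k!}\sum_{j=0}^k(-1)^j\binom kj\left(\frac k2-j\right)^n$, and $T(n,k)=0$ for $k>n$. The $n$th central Fubini-like polynomial is $\mathfrak{C}_n(x)=\sum_{k=0}^n k!\,T(n,k)\,x^k$. *)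

From HB Require Import structures.
From mathcomp Require Import all_boot all_order all_algebra.
Set Implicit Arguments. Unset Strict Implicit. Unset Printing Implicit Defensive.
Import Order.TTheory GRing.Theory Num.Theory.
Local Open Scope ring_scope.

Definition cfact2 (R : fieldType) (n k : nat) : R :=
  (k`!%:R)^-1 * \sum_(j < k.+1) (-1) ^+ j * 'C(k, j)%:R
                   * (k%:R / 2%:R - j%:R) ^+ n.

Definition central_fubini (R : fieldType) (n : nat) (x : R) : R :=
  \sum_(k < n.+1) k`!%:R * cfact2 R n k * x ^+ k.

Definition Rcoef (R : fieldType) (x : R) (j : nat) : R :=
  x * ((-1) ^+ j.-1 / j`!%:R) * ((2%:R)^-1 ^+ j - (- (2%:R)^-1) ^+ j).

Definition hess_mx (R : fieldType) (x : R) (n : nat) : 'M[R]_n :=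
  \matrix_(i < n, j < n)
    if (j <= i)%N then Rcoef x (i - j).+1
    else if (nat_of_ord j == (nat_of_ord i).+1)%N then 1 else 0.

From HB Require Import structures.
From mathcomp Require Import all_boot all_order all_algebra.
From mathcomp Require Import zify ring.
Set Implicit Arguments. Unset Strict Implicit. Unset Printing Implicit Defensive.
Import Order.TTheory GRing.Theory Num.Theory.
Local Open Scope ring_scope.

(* A lower Hessenberg Toeplitz matrix with entries (-1)^(i-j) a_(i-j+1) and
   ones on the superdiagonal has determinant c_n, where c_0 = 1 and
   c_(m+1) = sum_j a_(j+1) c_(m-j): right multiplication by the unitriangular
   matrix whose first column is ((-1)^k c_k)_k kills the first column except
   for its last entry, (-1)^(n-1) c_n.  On the other hand, k! T(n,k) is the
   k-th central difference of t^n at 0, so splitting one difference off gives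
   k! T(n,k) a binomial recurrence in n with coefficients (1/2)^j - (-1/2)^j;
   summed against x^k / n! it says that c_n = C_n(x) / n! solves the
   recurrence above with a_j = x ((1/2)^j - (-1/2)^j) / j!, and indeed
   R(j) = (-1)^(j-1) a_j. *)

Section ToeplitzHessenberg.

Variables (R : comPzRingType) (a c : nat -> R).
Hypothesis c0 : c 0 = 1.
Hypothesis cS : forall m, c m.+1 = \sum_(j < m.+1) a j.+1 * c (m - j).

Definition toeplitz_hessenberg_mx n : 'M[R]_n :=
  \matrix_(i, j) if (j <= i)%N then (-1) ^+ (i - j) * a (i - j).+1
                 else ((j : nat) == i.+1)%:R.

Lemma sum_toeplitz_hessenberg_row n (i : 'I_n) (v : nat -> R) :
  \sum_(k < n) toeplitz_hessenberg_mx n i k * v k =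
  \sum_(k < i.+1) (-1) ^+ (i - k) * a (i - k).+1 * v k
    + (i.+1 < n)%:R * v i.+1.
Proof.
pose F k := (if (k <= i)%N then (-1) ^+ (i - k) * a (i - k).+1
             else (k == i.+1)%:R) * v k.
rewrite (eq_bigr (F \o val)) => [|k _]; last by rewrite mxE.
rewrite -(big_mkord xpredT F) (big_cat_nat (leq0n i.+1)) ?ltn_ord //=.
rewrite big_mkord; congr (_ + _).
  by apply: eq_bigr => k _; rewrite /F -ltnS ltn_ord.
case: ltnP => [lt_in | le_ni]; last first.
  by rewrite big_geq ?mul0r // -(ltn_ord i).
rewrite big_ltn_cond // /F ltnn eqxx mul1r big1_seq ?addr0 // => k.
rewrite mem_index_iota => /andP[_ /andP[lt_ik _]].
by rewrite leqNgt ltnW // gtn_eqF // mul0r.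
Qed.

Lemma sum_signed_convolution i :
  \sum_(k < i.+1) (-1) ^+ (i - k) * a (i - k).+1 * ((-1) ^+ k * c k)
  = (-1) ^+ i * c i.+1.
Proof.
rewrite cS mulr_sumr (reindex_inj rev_ord_inj) /=; apply: eq_bigr => k _.
have le_ki : (k <= i)%N by rewrite -ltnS.
have -> : (-1) ^+ i = (-1) ^+ k * (-1) ^+ (i - k) :> R by rewrite -exprD subnKC.
rewrite subSS subKn //; ring.
Qed.

Lemma det_toeplitz_hessenberg_minor m :
  \det (row' ord_max (col' ord0 (toeplitz_hessenberg_mx m.+1))) = 1.
Proof.
have bump_max (k : 'I_m) : bump m k = k by rewrite /bump leqNgt ltn_ord.
rewrite det_trig.
  by apply: big1 => i _; rewrite !mxE /= bump_max ltnn eqxx.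
apply/forallP => i; apply/forallP => j; apply/implyP => lt_ij.
by rewrite !mxE /= bump_max ltnNge ltnW //= eqSS gtn_eqF.
Qed.

Lemma det_toeplitz_hessenberg n : \det (toeplitz_hessenberg_mx n) = c n.
Proof.
case: n => [|m]; first by rewrite det_mx00 c0.
set H := toeplitz_hessenberg_mx m.+1.
pose U : 'M[R]_m.+1 :=
  \matrix_(i, j) if j == ord0 then (-1) ^+ i * c i else (i == j)%:R.
have detU : \det U = 1.
  rewrite det_trig; last first.
    apply/forallP => i; apply/forallP => j; apply/implyP => lt_ij.
    rewrite mxE -val_eqE /= gtn_eqF ?(leq_ltn_trans (leq0n i) lt_ij) //.
    by rewrite -val_eqE ltn_eqF.
  rewrite big_ord_recl big1 => [|i _]; last by rewrite mxE /= eqxx.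
  by rewrite mxE eqxx expr0 mul1r c0 mulr1.
have HU_col0 i :
    (H *m U) i ord0 = if i == ord_max then (-1) ^+ m * c m.+1 else 0.
  rewrite mxE (eq_bigr (fun k : 'I_m.+1 => H i k * ((-1) ^+ k * c k))).
    rewrite (sum_toeplitz_hessenberg_row i (fun k => (-1) ^+ k * c k)).
    rewrite sum_signed_convolution.
    case: eqP => [-> | /eqP ne_im]; first by rewrite /= ltnn mul0r addr0.
    have lt_im : (i < m)%N by rewrite ltn_neqAle -ltnS ltn_ord andbT; exact: ne_im.
    by rewrite ltnS lt_im mul1r exprS; ring.
  by move=> k _; rewrite [U _ _]mxE eqxx.
have HU_col i j : j != ord0 -> (H *m U) i j = H i j.
  move=> nz_j; rewrite mxE (bigD1 j) //= big1 => [|l ne_lj].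
    by rewrite [U _ _]mxE (negbTE nz_j) eqxx mulr1 addr0.
  by rewrite [U _ _]mxE (negbTE nz_j) (negbTE ne_lj) mulr0.
have col'_HU : col' ord0 (H *m U) = col' ord0 H.
  by apply/matrixP => i j; rewrite [LHS]mxE [RHS]mxE HU_col.
rewrite -[LHS]mulr1 -detU -det_mulmx (expand_det_col _ ord0).
rewrite (bigD1 ord_max) //= big1 => [|i /negbTE ne_im]; last first.
  by rewrite HU_col0 ne_im mul0r.
rewrite HU_col0 eqxx addr0 /cofactor col'_HU det_toeplitz_hessenberg_minor addn0 mulr1.
by rewrite mulrAC -exprD -signr_odd oddD addbb mul1r.
Qed.

End ToeplitzHessenberg.

Lemma sum_binomial_exprB (R : comPzRingType) (a b g : R) n :
  \sum_(j < n.+1) 'C(n, j)%:R * (a ^+ j - b ^+ j) * g ^+ (n - j)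
  = (a + g) ^+ n - (b + g) ^+ n.
Proof.
rewrite (addrC a) (addrC b) !exprDn -sumrB; apply: eq_bigr => j _.
by rewrite -[_ *+ 'C(n, j)]mulr_natr; ring.
Qed.

Lemma sum_alternating_binomialS (R : comPzRingType) (W : nat -> R) k :
  \sum_(i < k.+2) (-1) ^+ i * 'C(k.+1, i)%:R * W i
  = \sum_(i < k.+1) (-1) ^+ i * 'C(k, i)%:R * (W i - W i.+1).
Proof.
rewrite big_ord_recl /=.
under eq_bigr => i _ do rewrite /bump /= add1n binS natrD mulrDr mulrDl.
rewrite big_split /=.
under [in RHS]eq_bigr => i _ do rewrite mulrBr.
rewrite sumrB addrA; congr (_ + _).
  transitivity (\sum_(i < k.+2) (-1) ^+ i * 'C(k, i)%:R * W i).
    by rewrite [RHS]big_ord_recl /= !bin0.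
  by rewrite [LHS]big_ord_recr /= bin_small // mulr0 mul0r addr0.
by rewrite -sumrN; apply: eq_bigr => i _; rewrite exprS; ring.
Qed.

Section CentralDifferences.

Variable R : fieldType.

Definition half_pow_diff j : R := 2%:R^-1 ^+ j - (- 2%:R^-1) ^+ j.

Definition central_diff_pow k n : R :=
  \sum_(i < k.+1) (-1) ^+ i * 'C(k, i)%:R * (k%:R / 2%:R - i%:R) ^+ n.

Lemma half_pow_diff0 : half_pow_diff 0 = 0.
Proof. by rewrite /half_pow_diff !expr0 subrr. Qed.

Lemma central_diff_pow0 n : central_diff_pow 0 n = (n == 0)%:R.
Proof. by rewrite /central_diff_pow big_ord1 expr0 bin0 !mul1r mul0r subr0 expr0n. Qed.

Hypothesis two_neq0 : (2%:R : R) != 0.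

(* The first difference of t^n is (t + 1/2)^n - (t - 1/2)^n
   = sum_j C(n,j) half_pow_diff j t^(n-j). *)
Lemma central_diff_powS k n :
  central_diff_pow k.+1 n
  = \sum_(j < n.+1) 'C(n, j)%:R * half_pow_diff j * central_diff_pow k (n - j).
Proof.
rewrite /central_diff_pow; under [in RHS]eq_bigr => j _ do rewrite mulr_sumr.
rewrite exchange_big /=.
rewrite (sum_alternating_binomialS (fun i => (k.+1%:R / 2%:R - i%:R) ^+ n)).
apply: eq_bigr => i _.
transitivity ((-1) ^+ i * 'C(k, i)%:R * \sum_(j < n.+1)
    'C(n, j)%:R * half_pow_diff j * (k%:R / 2%:R - i%:R) ^+ (n - j)); last first.
  by rewrite mulr_sumr; apply: eq_bigr => j _; ring.
rewrite sum_binomial_exprB -[k.+1%:R]natr1 -[i.+1%:R]natr1.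
by congr (_ * (_ ^+ _ - _ ^+ _)); field.
Qed.

Lemma central_diff_pow_small k n : (n < k)%N -> central_diff_pow k n = 0.
Proof.
elim: k n => [//|k IHk] n lt_nk; rewrite central_diff_powS; apply: big1 => j _.
have [-> | pos_j] := posnP j; first by rewrite half_pow_diff0 mulr0 mul0r.
by rewrite IHk ?mulr0 //; have := ltn_ord j; lia.
Qed.

Lemma sum_central_diff_pow_widen (x : R) N n : (n < N)%N ->
  \sum_(k < N) central_diff_pow k n * x ^+ k
  = \sum_(k < n.+1) central_diff_pow k n * x ^+ k.
Proof.
move=> lt_nN.
rewrite [RHS](big_ord_widen N (fun k => central_diff_pow k n * x ^+ k)) //.
rewrite [RHS]big_mkcond /=.
apply: eq_bigr => k _; case: ltnP => // le_nk.
by rewrite central_diff_pow_small ?mul0r.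
Qed.

End CentralDifferences.

Section CentralFubini.

Variable R : numFieldType.
Implicit Types (x : R) (m n : nat).

Lemma natr_fact_neq0 n : (n`!%:R : R) != 0.
Proof. by rewrite pnatr_eq0 -lt0n fact_gt0. Qed.

Lemma two_neq0 : (2%:R : R) != 0.
Proof. by rewrite pnatr_eq0. Qed.

Lemma central_fubiniE n x :
  central_fubini n x = \sum_(k < n.+1) central_diff_pow R k n * x ^+ k.
Proof.
by apply: eq_bigr => k _; rewrite /cfact2 mulrA mulfV ?natr_fact_neq0 ?mul1r.
Qed.

Lemma central_fubini0 x : central_fubini 0 x = 1.
Proof. by rewrite central_fubiniE big_ord1 central_diff_pow0 mul1r. Qed.

Lemma central_fubiniS x m :
  central_fubini m.+1 x = \sum_(j < m.+1)
    'C(m.+1, j.+1)%:R * (x * half_pow_diff R j.+1) * central_fubini (m - j) x.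
Proof.
rewrite central_fubiniE big_ord_recl central_diff_pow0 mul0r add0r.
under eq_bigr do rewrite central_diff_powS ?two_neq0 // mulr_suml.
rewrite exchange_big big_ord_recl /= big1 => [|k _]; last first.
  by rewrite half_pow_diff0 mulr0 !mul0r.
rewrite add0r; apply: eq_bigr => j _.
rewrite /bump /= add1n subSS central_fubiniE.
rewrite -(sum_central_diff_pow_widen two_neq0 x (_ : m - j < m.+1)%N); last lia.
by rewrite mulr_sumr; apply: eq_bigr => k _; rewrite exprS; ring.
Qed.

Definition fubini_coef x j := x * half_pow_diff R j / j`!%:R.

Lemma central_fubini_divS x m :
  central_fubini m.+1 x / m.+1`!%:R
  = \sum_(j < m.+1) fubini_coef x j.+1 * (central_fubini (m - j) x / (m - j)`!%:R).
Proof.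
rewrite central_fubiniS mulr_suml; apply: eq_bigr => j _.
have le_jm : (j <= m)%N by rewrite -ltnS.
have factE : 'C(m.+1, j.+1)%:R * (j.+1`!%:R * (m - j)`!%:R) = m.+1`!%:R :> R.
  by rewrite -!natrM -(bin_fact (_ : j.+1 <= m.+1)%N) ?subSS.
have binC_neq0 : ('C(m.+1, j.+1)%:R : R) != 0 by rewrite pnatr_eq0 -lt0n bin_gt0.
rewrite /fubini_coef -factE; field.
by rewrite binC_neq0 !natr_fact_neq0.
Qed.

Lemma hess_mxE x n : hess_mx x n = toeplitz_hessenberg_mx (fubini_coef x) n.
Proof.
apply/matrixP => i j; rewrite !mxE; case: ifP => _; last by case: eqP.
by rewrite /Rcoef /fubini_coef /half_pow_diff /=; ring.
Qed.

End CentralFubini.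

Theorem theorem10 (R : realFieldType) (n : nat) (x : R) (hn : (0 < n)%N) :
  central_fubini n x / n`!%:R = \det (hess_mx x n).
Proof.
pose c m := central_fubini m x / m`!%:R.
have c0 : c 0 = 1 by rewrite /c central_fubini0 fact0 divr1.
by rewrite hess_mxE (det_toeplitz_hessenberg c0 (central_fubini_divS x)).
Qed.
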